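(* Let $s,r,u\in \mathcal{X}$, $s=(s_1,\dots, s_n)$, $r=(r_1,\dots, r_n)$, $u=(u_1,\dots,u_n)$, lie in pairwise different orbits with $\mathbb{F}_{q^m}=\mathbb{F}_q(r_1)=\mathbb{F}_q(s_1)$. Then there exists $F\in \mathrm{TA}_n(\mathbb{F}_q)$ such that $F([r])=[s]$ and $F([u])=[u]$.
   Context: Fix $m$, a prime power $q$, $n\geq 3$. $\Delta=\mathrm{Gal}(\mathbb{F}_{q^m}:\mathbb{F}_q)$ acts coordinatewise on $\mathbb{F}_{q^m}^n$; $[v]$ denotes the $\Delta$-orbit of $v$, and $\mathcal{X}$ is the union of orbits of size $m$. $\mathrm{TA}_n(\mathbb{F}_q)$ is the tame automorphism group generated by invertible affine maps and triangular maps $(a_1X_1+f_1,\dots,a_nX_n+f_n)$, $a_i\in\mathbb{F}_q^*$, $f_i\in\mathbb{F}_q[X_{i+1},\dots,X_n]$; it acts on orbits since its elements commute with $\Delta$. *)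

From HB Require Import structures.
From mathcomp Require Import all_boot all_order all_algebra all_fingroup all_field.
From mathcomp Require Import mpoly.
Set Implicit Arguments. Unset Strict Implicit. Unset Printing Implicit Defensive.
Import GRing.Theory.
Local Open Scope ring_scope.

Section Defs.
(* F plays F_q, L plays F_{q^m} with m = \dim_F L. *)
Variables (F : finFieldType) (L : fieldExtType F) (n : nat).

(* Delta = Gal(L/F): F-linear ring automorphisms of L (mathcomp's kAut). *)
Definition inDelta (f : 'End(L)) : Prop := kAut 1%VS fullv f.

Definition dorbit (v w : 'rV[L]_n) : Prop :=
  exists2 f : 'End(L), inDelta f & w = map_mx f v.

Definition orbit_size (v : 'rV[L]_n) (k : nat) : Prop :=
  exists s : seq 'rV[L]_n, [/\ uniq s, size s = k & forall w, dorbit v w <-> w \in s].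

Definition inX (v : 'rV[L]_n) : Prop := orbit_size v (\dim (fullv : {vspace L})).

Definition polymap := n.-tuple {mpoly F[n]}.

Definition pm_comp (P Q : polymap) : polymap := [tuple tnth P i \mPo Q | i < n].

Definition affine_inv (P : polymap) : Prop :=
  exists (A : 'M[F]_n) (b : 'rV[F]_n), A \in unitmx /\
    forall i : 'I_n, tnth P i = \sum_(j < n) A i j *: 'X_j + (b 0 i)%:MP.

Definition triangular (P : polymap) : Prop :=
  exists (a : 'I_n -> F) (f : 'I_n -> {mpoly F[n]}),
    (forall i, a i != 0) /\
    (forall i, forall mon, mon \in msupp (f i) ->
        forall j : 'I_n, (j <= i)%N -> mon j = 0%N) /\
    (forall i, tnth P i = a i *: 'X_i + f i).

(* TA_n(F_q): closure of affine and triangular maps under composition.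
   Since inverses of generators are generators, this is the generated group. *)
Inductive tame : polymap -> Prop :=
  | tame_aff P : affine_inv P -> tame P
  | tame_tri P : triangular P -> tame P
  | tame_comp P Q : tame P -> tame Q -> tame (pm_comp P Q).

Definition pm_app (P : polymap) (v : 'rV[L]_n) : 'rV[L]_n :=
  \row_i (map_mpoly (in_alg L) (tnth P i)).@[fun j => v 0 j].

End Defs.

From HB Require Import structures.
From mathcomp Require Import all_boot all_order all_algebra all_fingroup all_field.
From mathcomp Require Import mpoly.
Set Implicit Arguments. Unset Strict Implicit. Unset Printing Implicit Defensive.
Import GRing.Theory.
Local Open Scope ring_scope.

(** A single coordinate [j] of [v] is moved by a shear
    [X_j += q(X_a) m(X_b - phi(X_a))], where [v_a] generates [F_{q^m}],
    [phi(v_a) = v_b] and [m] is the minimal polynomial of [u_b - phi(u_a) <> 0]: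
    the shear fixes [u], and a suitable [q] sends [v_j] anywhere.  Such [b] and
    [phi] exist as soon as no Galois conjugate of [v] agrees with [u] off [j].
    Coordinates holding a value in {0, 1} different from the matching coordinate
    of [u] are never matched by a conjugate; keeping one of them in place, one
    walks [r -> (r_1, _, ..., _) -> (s_1, _, ..., _) -> s], the middle step
    using a second coordinate as temporary generator.  Polynomial maps over
    [F_q] commute with the Galois group, so the map sends [[r]] onto [[s]] and
    [[u]] onto itself. *)

Section Evaluation.
Variables (F : fieldType) (L : fieldExtType F) (n : nat).

Definition evL (w : 'I_n -> L) : {mpoly F[n]} -> L :=
  meval w \o map_mpoly (in_alg L).
HB.instance Definition _ w := GRing.RMorphism.copy (evL w) (evL w).

Lemma evLC w c : evL w c%:MP = c%:A.
Proof. by rewrite /evL /= map_mpolyC mevalC. Qed.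

Lemma evLX w i : evL w 'X_i = w i.
Proof. by rewrite /evL /= map_mpolyX mevalXU. Qed.

Lemma evLE w p : evL w p = \sum_(m <- msupp p) (p@_m)%:A * \prod_i w i ^+ m i.
Proof.
rewrite /evL /= mevalE (perm_big _ (msupp_map_mpoly _ (fmorph_inj _))).
by apply: eq_bigr => m _; rewrite mcoeff_map_mpoly.
Qed.

Lemma evL_comp w p (lq : n.-tuple {mpoly F[n]}) :
  evL w (p \mPo lq) = evL (fun i => evL w (tnth lq i)) p.
Proof.
rewrite /evL /= map_mpoly_comp ?comp_mpoly_meval; last exact: fmorph_inj.
by apply: meval_eq => i; rewrite tnth_map.
Qed.

Lemma evL_horner w (p : {poly F}) x :
  evL w (map_poly (@mpolyC n F) p).[x] = (map_poly (in_alg L) p).[evL w x].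
Proof.
rewrite -horner_map -map_poly_comp; congr _.[_].
by apply: eq_map_poly => c /=; rewrite evLC.
Qed.

Lemma ahom_evL (g : 'AEnd(L)) w p : g (evL w p) = evL (g \o w) p.
Proof.
rewrite !evLE rmorph_sum; apply: eq_bigr => m _.
rewrite rmorphM /= linearZ rmorph1 rmorph_prod; congr (_ * _).
by apply: eq_bigr => i _; rewrite rmorphXn.
Qed.

End Evaluation.

Section PolynomialMaps.
Variables (F : finFieldType) (L : fieldExtType F) (n : nat).

Lemma pm_appE (P : polymap F n) (v : 'rV[L]_n) i : pm_app P v 0 i = evL (v 0) (tnth P i).
Proof. by rewrite mxE. Qed.

Lemma pm_app_comp (P Q : polymap F n) (v : 'rV[L]_n) :
  pm_app (pm_comp P Q) v = pm_app P (pm_app Q v).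
Proof.
apply/rowP => i; rewrite !pm_appE tnth_mktuple evL_comp.
by apply: meval_eq => j; rewrite pm_appE.
Qed.

Lemma ahom_pm_app (g : 'AEnd(L)) (P : polymap F n) (v : 'rV[L]_n) :
  map_mx g (pm_app P v) = pm_app P (map_mx g v).
Proof.
apply/rowP => i; rewrite mxE !pm_appE ahom_evL.
by apply: meval_eq => j; rewrite /= mxE.
Qed.

End PolynomialMaps.

Section Conjugates.
Variables (F : fieldType) (L : fieldExtType F).
Local Notation liftp p := (map_poly (in_alg L) p).

Lemma ahom_horner (g : 'AEnd(L)) (p : {poly F}) x : g (liftp p).[x] = (liftp p).[g x].
Proof.
rewrite -horner_map -map_poly_comp; congr _.[_].
by apply: eq_map_poly => c /=; rewrite linearZ /= rmorph1.
Qed.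

Section Generator.
Variables (x : L) (x_gen : <<1; x>>%VS = fullv).

Lemma generator_polyP y : exists p : {poly F}, (liftp p).[x] = y.
Proof.
have : y \in <<1; x>>%VS by rewrite x_gen memvf.
by case/Fadjoin1_polyP => p ->; exists p.
Qed.

Lemma ahom_eq_on_generator (g h : 'AEnd(L)) : g x = h x -> g =1 h.
Proof. by move=> eq_gh y; have [p <-] := generator_polyP y; rewrite !ahom_horner eq_gh. Qed.

Lemma ahom_conjugate y : root (minPoly 1 x) y -> exists g : 'AEnd(L), g x = y.
Proof.
move=> minPoly_y; have hom1 : kHom 1 1 (\1%VF : 'End(L)) := kHom1 1 1.
have root_y : root (map_poly \1%VF (minPoly 1 x)) y.
  by rewrite (kHom_poly_id hom1) ?minPolyOver.
have := kHomExtendP (sub1v _) hom1 root_y; rewrite x_gen k1HomE => homL.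
by exists (AHom homL); apply: (kHomExtend_val hom1).
Qed.

End Generator.

Lemma minPoly1_lift (x : L) : exists m : {poly F}, minPoly 1 x = liftp m.
Proof. by have /polyOver1P[m ->] := minPolyOver 1 x; exists m. Qed.

Lemma root_minPoly_ahom (g : 'AEnd(L)) x : root (minPoly 1 x) (g x).
Proof.
have [m def_m] := minPoly1_lift x.
by rewrite /root def_m -ahom_horner -def_m minPolyxx linear0.
Qed.

Lemma minPoly_coef0_neq0 (x : L) : x != 0 -> (minPoly 1 x).[0] != 0.
Proof.
move=> x_neq0; apply: contraNneq (oner_neq0 L) => minPoly_0.
have : 'X %| minPoly 1 x by rewrite -['X]subr0 dvdp_XsubCl; apply/rootP.
case/(minPoly_irr (polyOverX _))/orP => [/eqp_root X_minPoly | /eqp_size].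
  by move: (root_minPoly 1 x); rewrite -X_minPoly rootX (negbTE x_neq0).
by rewrite size_polyX size_poly1.
Qed.

(* A coordinate of [v] equal to [apart (u 0 k)] stays different from [u 0 k]
   under every conjugation. *)
Definition apart (y : L) : L := (y == 0)%:R.

Lemma ahom_apart (g : 'AEnd(L)) y : g (apart y) != y.
Proof.
rewrite /apart rmorph_nat; have [-> | y_neq0] := eqVneq y 0.
  exact: oner_neq0.
by rewrite eq_sym.
Qed.

End Conjugates.

Section Composition.
Variables (R : comRingType) (n k l : nat).

Lemma comp_mpolyA (p : {mpoly R[n]}) (lq : n.-tuple {mpoly R[k]})
    (lr : k.-tuple {mpoly R[l]}) :
  (p \mPo lq) \mPo lr = p \mPo [tuple tnth lq i \mPo lr | i < n].
Proof.
rewrite [p \mPo lq]comp_mpolyE raddf_sum [RHS]comp_mpolyE; apply: eq_bigr => m _.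
rewrite /= comp_mpolyZ rmorph_prod; congr (_ *: _); apply: eq_bigr => i _.
by rewrite rmorphXn tnth_mktuple.
Qed.

End Composition.

Section FreeOf.
Variables (R : comRingType) (n : nat).

Definition free_of_pred (i : 'I_n) :=
  fun p : {mpoly R[n]} => all (fun m : 'X_{1..n} => m i == 0%N) (msupp p).
Arguments free_of_pred i p /.
Definition free_of i := [qualify p : {mpoly R[n]} | free_of_pred i p].

Lemma free_ofP (i : 'I_n) (p : {mpoly R[n]}) :
  reflect {in msupp p, forall m : 'X_{1..n}, m i = 0%N} (p \is free_of i).
Proof. by apply: (iffP allP) => free_p m /free_p /eqP. Qed.

Fact free_of_subring_closed i : subring_closed (free_of i).
Proof.
split.
- by apply/free_ofP => m; rewrite msupp1 inE => /eqP ->; rewrite mnm0E.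
- move=> p q /free_ofP free_p /free_ofP free_q; apply/free_ofP => m.
  by move/msuppB_le; rewrite mem_cat => /orP[/free_p | /free_q].
- move=> p q /free_ofP free_p /free_ofP free_q; apply/free_ofP => m.
  case/msuppM_le/allpairsP => -[m1 m2] [/free_p + /free_q + ->].
  by rewrite mnmDE => -> ->.
Qed.

HB.instance Definition _ i :=
  GRing.isSubringClosed.Build {mpoly R[n]} (free_of_pred i) (free_of_subring_closed i).

Lemma free_ofC i c : c%:MP \is free_of i.
Proof.
apply/free_ofP => m; rewrite msuppC; case: eqP => // _.
by rewrite inE => /eqP ->; rewrite mnm0E.
Qed.

Lemma free_ofX i j : j != i -> 'X_j \is free_of i.
Proof.
move=> ji; apply/free_ofP => m; rewrite msuppX inE => /eqP ->.
by rewrite mnm1E (negbTE ji).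
Qed.

Lemma free_of_horner i (p : {poly R}) x :
  x \is free_of i -> (map_poly (@mpolyC n R) p).[x] \is free_of i.
Proof.
apply: rpred_horner; apply/polyOverP => k.
by rewrite coef_map free_ofC.
Qed.

Lemma free_of_comp i j p (lq : n.-tuple {mpoly R[n]}) :
  p \is free_of j -> (forall k, k != j -> tnth lq k \is free_of i) ->
  p \mPo lq \is free_of i.
Proof.
move=> /free_ofP free_p free_lq; rewrite comp_mpolyE big_seq rpred_sum // => m /free_p m_j.
rewrite -mul_mpolyC rpredM ?free_ofC // rpred_prod // => k _.
by have [-> | /free_lq/rpredX-> //] := eqVneq k j; rewrite m_j expr0 rpred1.
Qed.

End FreeOf.
Arguments free_of {R n} i.

Section TameMaps.
Variables (F : finFieldType) (n : nat).

Definition perm_map (s : {perm 'I_n}) : polymap F n := [tuple 'X_(s i) | i < n].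

Lemma affine_perm_map s : affine_inv (perm_map s).
Proof.
exists (perm_mx s), 0; split=> [|i]; first exact: unitmx_perm.
rewrite tnth_mktuple mxE rmorph0 addr0 (bigD1 (s i)) //= big1 ?addr0.
  by rewrite !mxE eqxx scale1r.
by move=> j /negbTE s_j; rewrite !mxE eq_sym s_j scale0r.
Qed.

Definition shear (j : 'I_n) (G : {mpoly F[n]}) : polymap F n :=
  [tuple 'X_i + (if i == j then G else 0) | i < n].

Lemma triangular_shear (i0 : 'I_n) G :
  val i0 = 0%N -> G \is free_of i0 -> triangular (shear i0 G).
Proof.
move=> i0_0 /free_ofP free_G.
exists (fun=> 1), (fun i => if i == i0 then G else 0); split=> [i|]; first exact: oner_neq0.
split=> [i m|i]; last by rewrite tnth_mktuple scale1r.
case: eqP => [-> m_G j|_]; last by rewrite msupp0.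
move/leq_trans/(_ (eq_leq i0_0)); rewrite leqn0 => /eqP j_0.
by rewrite (_ : j = i0) ?free_G //; apply: val_inj; rewrite /= j_0.
Qed.

(* Conjugation by the transposition of [0] and [j] makes the shear triangular. *)
Lemma tame_shear j G : G \is free_of j -> tame (shear j G).
Proof.
move=> free_G; pose i0 : 'I_n := Ordinal (leq_ltn_trans (leq0n j) (ltn_ord j)).
pose t := tperm i0 j; pose G' := G \mPo perm_map t.
have t_i0 k : (t k == i0) = (k == j).
  by rewrite -[X in _ == X](tpermR i0 j) (inj_eq perm_inj).
have -> : shear j G = pm_comp (perm_map t) (pm_comp (shear i0 G') (perm_map t)).
  apply: eq_from_tnth => i; rewrite !tnth_mktuple comp_mpolyXU -tnth_nth !tnth_mktuple.
  rewrite raddfD /= comp_mpolyXU -tnth_nth tnth_mktuple tpermK t_i0.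
  case: eqP => _; last by rewrite raddf0.
  rewrite /G' comp_mpolyA -{1}[G]comp_mpoly_id; congr (_ + comp_mpoly _ _).
  by apply: eq_from_tnth => k; rewrite !tnth_mktuple comp_mpolyXU -tnth_nth tnth_mktuple tpermK.
have tame_t : tame (perm_map t) by apply: tame_aff; apply: affine_perm_map.
apply: tame_comp => //; apply: tame_comp => //.
apply/tame_tri/triangular_shear => //.
by apply: (free_of_comp free_G) => k k_j; rewrite tnth_mktuple free_ofX // t_i0.
Qed.

Variable (L : fieldExtType F).

Lemma pm_app_perm_map s (v : 'rV[L]_n) : pm_app (perm_map s) v = \row_i v 0 (s i).
Proof. by apply/rowP => i; rewrite pm_appE tnth_mktuple evLX mxE. Qed.

Lemma pm_app_shear j G (v : 'rV[L]_n) :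
  pm_app (shear j G) v = \row_i (v 0 i + (if i == j then evL (v 0) G else 0)).
Proof.
apply/rowP => i; rewrite pm_appE tnth_mktuple !mxE rmorphD /= evLX.
by case: eqP => _; rewrite ?rmorph0.
Qed.

End TameMaps.

Section Orbits.
Variables (F : finFieldType) (L : fieldExtType F) (n : nat).

Lemma dorbitP (v w : 'rV[L]_n) : dorbit v w <-> exists g : 'AEnd(L), w = map_mx g v.
Proof.
split=> [[f /andP[homf _] ->] | [g ->]].
  by rewrite k1HomE in homf; exists (AHom homf).
by exists (ahval g); rewrite // /inDelta kAutfE k1AHom.
Qed.

Lemma pm_app_dorbit (P : polymap F n) (v w : 'rV[L]_n) :
  (exists2 v', dorbit v v' & w = pm_app P v') <-> dorbit (pm_app P v) w.
Proof.
rewrite dorbitP; split=> [[_ /dorbitP[g ->] ->] | [g ->]].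
  by exists g; rewrite ahom_pm_app.
by exists (map_mx g v); [apply/dorbitP; exists g | rewrite ahom_pm_app].
Qed.

End Orbits.

Section Moves.
Variables (F : finFieldType) (L : fieldExtType F) (n : nat) (u : 'rV[L]_n).
Local Notation liftp p := (map_poly (in_alg L) p).
Local Notation liftX p := (map_poly (@mpolyC n F) p).
Local Notation generates x := (<<1; x%R>>%VS = fullv).
Implicit Types (r s v x y : 'rV[L]_n) (g h : 'AEnd(L)).

Definition reach (v x : 'rV[L]_n) :=
  exists P : polymap F n, [/\ tame P, pm_app P v = x & pm_app P u = u].

Lemma reach_trans v x y : reach v x -> reach x y -> reach v y.
Proof.
move=> [P [tP Pv Pu]] [Q [tQ Qx Qu]]; exists (pm_comp Q P).
by rewrite !pm_app_comp Pv Pu Qx Qu; split=> //; apply: tame_comp.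
Qed.

(* [tame] has no inverses built in, so the reverse moves are recorded too. *)
Definition linked v x := reach v x /\ reach x v.

Lemma linked_refl v : linked v v.
Proof.
have id_v w : pm_app (perm_map F 1) w = w.
  by apply/rowP => i; rewrite pm_app_perm_map mxE perm1.
by split; exists (perm_map F 1); rewrite !id_v; split=> //; apply/tame_aff/affine_perm_map.
Qed.

Lemma linked_sym v x : linked v x -> linked x v.
Proof. by case. Qed.

Lemma linked_trans v x y : linked v x -> linked x y -> linked v y.
Proof. by move=> [vx xv] [xy yx]; split; [apply: reach_trans xy | apply: reach_trans xv]. Qed.

Definition differs_off (v : 'rV[L]_n) (j : 'I_n) :=
  forall g : 'AEnd(L), exists2 k, k != j & g (v 0 k) != u 0 k.

Lemma separating_poly v (j a : 'I_n) :
  a != j -> generates (v 0 a) -> differs_off v j ->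
  exists b (phi : {poly F}),
    [/\ b != j, (liftp phi).[v 0 a] = v 0 b & (liftp phi).[u 0 a] != u 0 b].
Proof.
move=> a_j gen_a differs.
have [/(ahom_conjugate gen_a)[h h_a] | not_conj] := boolP (root (minPoly 1 (v 0 a)) (u 0 a)).
  have [k k_j h_k] := differs h; have [phi phi_a] := generator_polyP gen_a (v 0 k).
  by exists k, phi; rewrite -h_a -ahom_horner phi_a.
have [m def_m] := minPoly1_lift (v 0 a).
move: (minPolyxx 1 (v 0 a)) not_conj; rewrite def_m /root => m_a m_u.
exists a, ('X - m); rewrite rmorphB /= map_polyX !hornerE m_a subr0.
by split=> //; rewrite subr_eq addrC -subr_eq subrr eq_sym.
Qed.

Lemma reach_shear v x (j a b : 'I_n) (phi : {poly F}) :
  a != j -> b != j -> generates (v 0 a) ->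
  (liftp phi).[v 0 a] = v 0 b -> (liftp phi).[u 0 a] != u 0 b ->
  (forall i, i != j -> x 0 i = v 0 i) -> reach v x.
Proof.
move=> a_j b_j gen_a phi_v phi_u x_v.
have [m def_m] := minPoly1_lift (u 0 b - (liftp phi).[u 0 a]).
have m_0 : (liftp m).[0] != 0 by rewrite -def_m minPoly_coef0_neq0 // subr_eq0 eq_sym.
have [q q_a] := generator_polyP gen_a ((x 0 j - v 0 j) / (liftp m).[0]).
pose G := (liftX q).['X_a] * (liftX m).['X_b - (liftX phi).['X_a]].
have free_G : G \is free_of j.
  by apply: rpredM; apply: free_of_horner; rewrite ?rpredB ?free_ofX ?free_of_horner ?free_ofX.
have evL_G w : evL w G = (liftp q).[w a] * (liftp m).[w b - (liftp phi).[w a]].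
  by rewrite rmorphM /= !evL_horner rmorphB /= evL_horner !evLX.
exists (shear j G); split; first exact: tame_shear.
  apply/rowP => i; rewrite pm_app_shear mxE evL_G phi_v subrr q_a divfK //.
  by case: eqP => [-> | /eqP/x_v ->]; rewrite ?addr0 // addrC subrK.
apply/rowP => i; rewrite pm_app_shear mxE evL_G -def_m minPolyxx mulr0.
by case: eqP; rewrite addr0.
Qed.

Lemma linked_step v x (j a : 'I_n) :
  a != j -> generates (v 0 a) -> differs_off v j ->
  (forall i, i != j -> x 0 i = v 0 i) -> linked v x.
Proof.
move=> a_j gen_a differs x_v.
have [b [phi [b_j phi_v phi_u]]] := separating_poly a_j gen_a differs.
split; first exact: (reach_shear a_j b_j gen_a phi_v phi_u x_v).
rewrite -(x_v a a_j) in gen_a; have differs_x : differs_off x j.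
  by move=> g; have [k k_j g_k] := differs g; exists k; rewrite ?x_v.
have [b' [phi' [b'_j phi'_x phi'_u]]] := separating_poly a_j gen_a differs_x.
by apply: (reach_shear a_j b'_j gen_a phi'_x phi'_u) => i /x_v <-.
Qed.

Lemma linked_fill v x (a w : 'I_n) :
  generates (v 0 a) -> x 0 a = v 0 a -> x 0 w = v 0 w ->
  (forall g, g (v 0 w) != u 0 w) -> linked v x.
Proof.
move=> gen_a x_a x_w protected_w.
(* Coordinates change one at a time; coordinate [w] keeps each step legal. *)
pose mix t := \row_i (if (i < t)%N then x 0 i else v 0 i).
have mix_eq t k : x 0 k = v 0 k -> mix t 0 k = v 0 k by rewrite mxE; case: ifP.
suff mix_linked t : (t <= n)%N -> linked v (mix t).
  by rewrite (_ : x = mix n); [apply: mix_linked | apply/rowP => i; rewrite mxE ltn_ord].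
elim: t => [_ | t IH lt_tn].
  by rewrite (_ : mix 0%N = v); [apply: linked_refl | apply/rowP => i; rewrite mxE].
pose it := Ordinal lt_tn; have {}IH := IH (ltnW lt_tn).
have mix_S i : i != it -> mix t.+1 0 i = mix t 0 i.
  move=> i_t; rewrite !mxE ltnS leq_eqVlt.
  by rewrite (_ : (i == t :> nat) = false) //; apply: contraNF i_t => /eqP i_t; apply/eqP/val_inj.
have [it_aw | ] := boolP ((it == a) || (it == w)).
  rewrite (_ : mix t.+1 = mix t) //; apply/rowP => i; have [-> | /mix_S //] := eqVneq i it.
  by rewrite !mxE ltnn leqnn; case/orP: it_aw => /eqP ->.
rewrite negb_or => /andP[it_a it_w].
apply: (linked_trans IH); apply: (linked_step (j := it) (a := a)) => //.
- by rewrite eq_sym.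
- by rewrite mix_eq.
- by move=> g; exists w; [rewrite eq_sym | rewrite mix_eq ?protected_w].
Qed.

Definition standard (i0 : 'I_n) (c : L) : 'rV[L]_n :=
  \row_i (if i == i0 then c else apart (u 0 i)).

Lemma differs_off_all_but_one v (i0 : 'I_n) :
  generates (v 0 i0) -> ~ dorbit v u ->
  exists k, forall j, j != i0 -> j != k -> differs_off v j.
Proof.
move=> gen_0 not_orbit.
(* Only a conjugate sending [v 0 i0] to [u 0 i0] can match [u] at [i0], and it
   is unique because [v 0 i0] generates. *)
have [/(ahom_conjugate gen_0)[h h_0] | not_root] := boolP (root (minPoly 1 (v 0 i0)) (u 0 i0)).
  have [k h_k | h_v] := pickP (fun k => h (v 0 k) != u 0 k); last first.
    case: not_orbit; apply/dorbitP; exists h; apply/rowP => k.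
    by rewrite mxE; apply/esym/eqP/negbFE/h_v.
  exists k => j j_0 j_k g; have [g_0 | g_0] := eqVneq (g (v 0 i0)) (u 0 i0).
    by exists k; [rewrite eq_sym | rewrite (ahom_eq_on_generator gen_0 (etrans g_0 (esym h_0)))].
  by exists i0; first rewrite eq_sym.
exists i0 => j j_0 _ g; exists i0; first by rewrite eq_sym.
by apply: contraNneq not_root => <-; apply: root_minPoly_ahom.
Qed.

Section ThreeCoordinates.
Variables (i0 i1 i2 : 'I_n) (i1_0 : i1 != i0) (i2_0 : i2 != i0) (i2_1 : i2 != i1).

Lemma linked_standard v :
  generates (v 0 i0) -> ~ dorbit v u -> linked v (standard i0 (v 0 i0)).
Proof.
move=> gen_0 not_orbit; have [k differs] := differs_off_all_but_one gen_0 not_orbit.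
pose j := if i1 == k then i2 else i1.
have j_0 : j != i0 by rewrite /j; case: ifP.
have j_k : j != k by rewrite /j; have [<- | ] := eqVneq i1 k.
pose v' := \row_i (if i == j then apart (u 0 j) else v 0 i).
apply: (linked_trans (x := v')).
  apply: (linked_step (j := j) (a := i0)) => //; first by rewrite eq_sym.
    exact: differs.
  by move=> i /negbTE i_j; rewrite mxE i_j.
have v'_0 : v' 0 i0 = v 0 i0 by rewrite mxE eq_sym (negbTE j_0).
apply: (linked_fill (a := i0) (w := j)).
- by rewrite v'_0.
- by rewrite v'_0 mxE eqxx.
- by rewrite !mxE eqxx (negbTE j_0).
- by move=> g; rewrite mxE eqxx ahom_apart.
Qed.

Lemma linked_standard_generators c c' :
  generates c -> generates c' -> linked (standard i0 c) (standard i0 c').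
Proof.
move=> gen_c gen_c'.
pose row e f := \row_i (if i == i0 then e else if i == i1 then f else apart (u 0 i)).
have std e : standard i0 e = row e (apart (u 0 i1)).
  by apply/rowP => i; rewrite !mxE; case: eqP => // _; case: eqP => // ->.
have fill e f e' f' a : generates (row e f 0 a) -> row e' f' 0 a = row e f 0 a ->
    linked (row e f) (row e' f').
  move=> gen_a same_a; apply: (linked_fill (a := a) (w := i2)) => //.
    by rewrite !mxE (negbTE i2_0) (negbTE i2_1).
  by move=> g; rewrite mxE (negbTE i2_0) (negbTE i2_1) ahom_apart.
have row_0 e f : row e f 0 i0 = e by rewrite mxE eqxx.
have row_1 e f : row e f 0 i1 = f by rewrite mxE (negbTE i1_0) eqxx.
(* [(c, _) -> (c, c) -> (c', c) -> (c', _)], coordinate [i2] staying protected. *)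
rewrite !std; apply: (linked_trans (fill _ _ c c i0 _ _)); rewrite ?row_0 //.
apply: (linked_trans (fill _ _ c' c i1 _ _)); rewrite ?row_1 //.
by apply: (fill _ _ _ _ i0); rewrite ?row_0.
Qed.

Lemma reach_of_generators r s :
  generates (r 0 i0) -> generates (s 0 i0) -> ~ dorbit r u -> ~ dorbit s u ->
  reach r s.
Proof.
move=> gen_r gen_s not_r not_s.
have [] // := linked_trans (linked_standard gen_r not_r)
  (linked_trans (linked_standard_generators gen_r gen_s)
     (linked_sym (linked_standard gen_s not_s))).
Qed.

End ThreeCoordinates.

End Moves.

Theorem mainTheorem12 (F : finFieldType) (L : fieldExtType F) (n : nat)
    (s r u : 'rV[L]_n) :
  (3 <= n)%N ->
  inX s -> inX r -> inX u ->
  ~ dorbit r s -> ~ dorbit r u -> ~ dorbit s u ->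
  (forall i : 'I_n, val i = 0%N -> <<1%VS; r ord0 i>>%VS = fullv) ->
  (forall i : 'I_n, val i = 0%N -> <<1%VS; s ord0 i>>%VS = fullv) ->
  exists P : polymap F n, tame P /\
    (forall w, (exists2 v, dorbit r v & w = pm_app P v) <-> dorbit s w) /\
    (forall w, (exists2 v, dorbit u v & w = pm_app P v) <-> dorbit u w).
Proof.
move=> n_ge3 _ _ _ _ not_ru not_su gen_r gen_s.
pose i0 : 'I_n := Ordinal (leq_trans (isT : 1 <= 3)%N n_ge3).
pose i1 : 'I_n := Ordinal (leq_trans (isT : 2 <= 3)%N n_ge3).
pose i2 : 'I_n := Ordinal n_ge3.
have [P [tame_P Pr Pu]] := @reach_of_generators F L n u i0 i1 i2 isT isT isT r s
  (gen_r i0 erefl) (gen_s i0 erefl) not_ru not_su.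
exists P; split=> //; split=> w.
  by rewrite -Pr; apply: pm_app_dorbit.
by rewrite -[X in dorbit X w]Pu; apply: pm_app_dorbit.
Qed.
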